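(* Let $E$ be an $n$-dimensional normed space over $K$ such that $\dim_{K^\vee}E^\vee=1$. Then all $(n-1)$-dimensional normed spaces of the form $E/[u]$ with $u\in E\setminus\{0\}$ are isometrically isomorphic to each other.
   Context: $K$ is a complete non-archimedean non-trivially valued field which is not spherically complete; $K^\vee$ is a fixed spherically complete immediate extension of $K$. Normed spaces are finite-dimensional non-archimedean normed spaces over $K$; $[u]$ is the $K$-span of $u$ and $E/[u]$ has the quotient norm. A subset $X\subseteq E\setminus\{0\}$ is orthogonal if $\|\sum\lambda_ix_i\|=\max\|\lambda_ix_i\|$ for finitely many distinct $x_i\in X$, $\lambda_i\in K$; $\dim_{K^\vee}E^\vee$ denotes the cardinality of a maximal orthogonal subset of $E$. *)

From HB Require Import structures.
From mathcomp Require Import all_boot all_order all_algebra.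
From mathcomp Require Import boolp classical_sets reals.
Set Implicit Arguments. Unset Strict Implicit. Unset Printing Implicit Defensive.
Import Order.TTheory GRing.Theory Num.Theory.
Local Open Scope ring_scope.
Local Open Scope classical_set_scope.

Section Defs.
Variables (R : realType) (K : fieldType).

Definition is_nonarch_abs (v : K -> R) : Prop :=
  [/\ forall x, 0 <= v x,
      forall x, v x = 0 <-> x = 0,
      forall x y, v (x * y) = v x * v y &
      forall x y, v (x + y) <= Num.max (v x) (v y)].

Definition nontrivially_valued (v : K -> R) : Prop :=
  exists x, v x != 0 /\ v x != 1.

Definition valued_complete (v : K -> R) : Prop :=
  forall u : nat -> K,
    (forall e : R, 0 < e -> exists M : nat,
        forall m n, (M <= m)%N -> (M <= n)%N -> v (u m - u n) < e) ->
    exists l : K, forall e : R, 0 < e -> exists M : nat,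
        forall n, (M <= n)%N -> v (u n - l) < e.

Definition spherically_complete (v : K -> R) : Prop :=
  forall (a : nat -> K) (r : nat -> R),
    (forall n, 0 < r n) ->
    (forall n x, v (x - a n.+1) <= r n.+1 -> v (x - a n) <= r n) ->
    exists x, forall n, v (x - a n) <= r n.

Variable E : vectType K.

Definition is_nonarch_norm (v : K -> R) (N : E -> R) : Prop :=
  [/\ forall x, 0 <= N x,
      forall x, N x = 0 <-> x = 0,
      forall (a : K) x, N (a *: x) = v a * N x &
      forall x y, N (x + y) <= Num.max (N x) (N y)].

Definition orthogonal_set (N : E -> R) (X : set E) : Prop :=
  (forall x, X x -> x != 0) /\
  forall (s : seq E) (c : E -> K), uniq s -> (forall x, x \in s -> X x) ->
    N (\sum_(x <- s) c x *: x) = \big[Num.max/0]_(x <- s) N (c x *: x).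

Definition maximal_orthogonal_set (N : E -> R) (X : set E) : Prop :=
  orthogonal_set N X /\
  forall Y : set E, orthogonal_set N Y -> X `<=` Y -> Y = X.

(* dim_{K^vee} E^vee = 1 : a maximal orthogonal subset of E has cardinality 1 *)
Definition dual_dim_one (N : E -> R) : Prop :=
  exists x0 : E, maximal_orthogonal_set N [set x0].

Definition quot_norm (N : E -> R) (u x : E) : R :=
  inf [set N (x - a *: u) | a in [set: K]].

(* E/[u] and E/[w] (with quotient norms) are isometrically isomorphic:
   a K-linear T : E -> E inducing a well-defined bijection
   E/[u] -> E/[w], x + [u] |-> T x + [w], which preserves quotient norms. *)
Definition quot_isometric (N : E -> R) (u w : E) : Prop :=
  exists T : {linear E -> E},
    [/\ forall x, (T x \in <[w]>%VS) <-> (x \in <[u]>%VS),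
        forall y, exists x, y - T x \in <[w]>%VS &
        forall x, quot_norm N w (T x) = quot_norm N u x].

End Defs.

(* If [x0] alone is a maximal orthogonal set, then every nonzero [u] is
   non-orthogonal to [x0] in both directions: dist(u, K x0) < N u and
   dist(x0, K u) < N x0, since otherwise {u, x0} would be orthogonal.  For two
   mutually non-orthogonal vectors [u] and [w], completeness of [K] gives, for
   every th < 1, a complement [H] of [K u] on which dist(h, K u) > th * N h
   (the span of a t-orthogonal sequence, t close to 1).  For th large enough, an
   exchange argument shows that dist(h, K w) = dist(h, K u) on [H]; hence [H]
   also complements [K w], and the projection onto [H] along [K u] induces an
   isometry E/[u] -> E/[w].  Any two lines are then connected through [x0]. *)
From HB Require Import structures.
From mathcomp Require Import all_boot all_order all_algebra.
From mathcomp Require Import boolp classical_sets reals.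
From mathcomp Require Import zify lra.
Import Order.TTheory GRing.Theory Num.Theory.
Set Implicit Arguments. Unset Strict Implicit. Unset Printing Implicit Defensive.
Local Open Scope ring_scope.
Local Open Scope classical_set_scope.

Lemma bernoulli_le (R : realDomainType) (e : R) n :
  0 <= e <= 1 -> 1 - n%:R * e <= (1 - e) ^+ n.
Proof.
case/andP=> e_ge0 e_le1; elim: n => [|n IH]; first by rewrite mul0r subr0 expr0.
by rewrite exprSr -natr1; have : 0 <= n%:R :> R by []; nra.
Qed.

Lemma exists_exprn_gt (R : realFieldType) (th : R) n :
  th < 1 -> exists t, [/\ 0 < t, t < 1 & th < t ^+ n].
Proof.
move=> th_lt1; pose d := 1 - Num.max th 0; pose e := d / n.+2%:R.
have d_gt0 : 0 < d by rewrite subr_gt0 gt_max th_lt1 ltr01.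
have d_le1 : d <= 1 by rewrite gerBl le_max lexx orbT.
have n2_gt0 : 0 < n.+2%:R :> R by rewrite ltr0Sn.
have de : e * n.+2%:R = d by rewrite divfK ?gt_eqF.
have n2E : n.+2%:R = n%:R + 2 :> R by rewrite -addn2 natrD.
have n_ge0 : 0 <= n%:R :> R := ler0n _ n.
have e_gt0 : 0 < e by rewrite divr_gt0.
have th_le : th <= 1 - d by rewrite /d opprB addrC subrK le_max lexx.
rewrite n2E in de.
exists (1 - e); split; [nra | nra |].
apply: (@lt_le_trans _ _ (1 - n%:R * e)); first nra.
by apply: bernoulli_le; apply/andP; split; nra.
Qed.

Lemma invSn_lt_eventually (R : archiFieldType) (d : R) :
  0 < d -> exists M, forall j, (M <= j)%N -> j.+1%:R^-1 < d.
Proof.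
move=> d_gt0; exists (Num.bound d^-1) => j le_Mj.
rewrite invf_plt ?posrE ?ltr0Sn //.
by apply: lt_le_trans (archi_boundP _) _; rewrite ?ler_nat ?leqW // invr_ge0 ltW.
Qed.

Section NonArchimedeanNorm.
Variables (R : realType) (K : fieldType) (v : K -> R) (hv : is_nonarch_abs v).
Variables (E : vectType K) (N : E -> R) (hN : is_nonarch_norm v N).

Lemma absv_ge0 x : 0 <= v x. Proof. by case: hv. Qed.

Lemma absv_eq0 x : (v x == 0) = (x == 0).
Proof. by case: hv => _ v0 _ _; apply/eqP/eqP => /v0. Qed.

Lemma absv_gt0 x : (0 < v x) = (x != 0).
Proof. by rewrite lt_def absv_eq0 absv_ge0 andbT. Qed.

Lemma absvM x y : v (x * y) = v x * v y. Proof. by case: hv. Qed.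

Lemma absvN1 : v (-1) = 1.
Proof.
have v1 : v 1 = 1.
  by apply: (@mulfI _ (v 1)); rewrite ?absv_eq0 ?oner_eq0 // -absvM !mulr1.
have : v (-1) ^+ 2 = 1 by rewrite expr2 -absvM mulrNN mulr1.
move/eqP; rewrite sqrf_eq1 => /orP[/eqP // | /eqP vN1].
by have := absv_ge0 (-1); rewrite vN1 ler0N1.
Qed.

Lemma nnorm_ge0 x : 0 <= N x. Proof. by case: hN. Qed.

Lemma nnorm_eq0 x : (N x == 0) = (x == 0).
Proof. by case: hN => _ N0 _ _; apply/eqP/eqP => /N0. Qed.

Lemma nnorm0 : N 0 = 0. Proof. by apply/eqP; rewrite nnorm_eq0. Qed.

Lemma nnorm_gt0 x : (0 < N x) = (x != 0).
Proof. by rewrite lt_def nnorm_eq0 nnorm_ge0 andbT. Qed.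

Lemma nnormZ a x : N (a *: x) = v a * N x. Proof. by case: hN. Qed.

Lemma nnormD x y : N (x + y) <= Num.max (N x) (N y). Proof. by case: hN. Qed.

Lemma nnormN x : N (- x) = N x.
Proof. by rewrite -scaleN1r nnormZ absvN1 mul1r. Qed.

Lemma nnormD_le x y r : N x <= r -> N y <= r -> N (x + y) <= r.
Proof. by move=> hx hy; apply: le_trans (nnormD x y) _; rewrite ge_max hx hy. Qed.

Lemma nnormD_lt x y r : N x < r -> N y < r -> N (x + y) < r.
Proof. by move=> hx hy; apply: le_lt_trans (nnormD x y) _; rewrite gt_max hx hy. Qed.

Lemma nnormD_eqr x y : N x < N y -> N (x + y) = N y.
Proof.
move=> lt_xy; apply/eqP; rewrite eq_le nnormD_le ?(ltW lt_xy) //=.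
have := nnormD (x + y) (- x); rewrite addrC addKr nnormN le_max.
by case/orP=> // le_yx; move: lt_xy; rewrite ltNge le_yx.
Qed.

Local Notation q := (quot_norm N).

Lemma quot_norm_has_inf u x : has_inf [set N (x - a *: u) | a in [set: K]].
Proof.
split; first by exists (N (x - 0 *: u)), 0.
by exists 0 => _ [a _ <-]; exact: nnorm_ge0.
Qed.

Lemma quot_norm_le u x a : q u x <= N (x - a *: u).
Proof. by apply: (ge_inf (quot_norm_has_inf u x).2); exists a. Qed.

Lemma quot_norm_ge u x r : (forall a, r <= N (x - a *: u)) -> r <= q u x.
Proof.
move=> hr; apply: lb_le_inf; first by exists (N (x - 0 *: u)), 0.
by move=> _ [a _ <-].
Qed.

Lemma quot_norm_ge0 u x : 0 <= q u x.
Proof. by apply: quot_norm_ge => a; exact: nnorm_ge0. Qed.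

Lemma quot_norm_le_nnorm u x : q u x <= N x.
Proof. by have := quot_norm_le u x 0; rewrite scale0r subr0. Qed.

Lemma quot_norm_lt u x r : q u x < r -> exists a, N (x - a *: u) < r.
Proof.
move=> lt_qr; have gap : 0 < r - q u x by rewrite subr_gt0.
have [_ [a _ <-]] := inf_adherent gap (quot_norm_has_inf u x).
by rewrite addrCA subrr addr0; exists a.
Qed.

Lemma quot_norm_eq_mod u x y : x - y \in <[u]>%VS -> q u x = q u y.
Proof.
case/vlineP=> b def_xy; have -> : x = y + b *: u by rewrite -def_xy addrC subrK.
rewrite /quot_norm; congr inf; apply/seteqP; split=> _ [a _ <-].
  by exists (a - b) => //; rewrite scalerBl opprB addrA.
by exists (a + b) => //; rewrite [a + b]addrC scalerDl opprD addrA addrK.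
Qed.

Lemma quot_norm_line u x : x \in <[u]>%VS -> q u x = 0.
Proof.
case/vlineP=> b ->; apply/eqP; rewrite eq_le quot_norm_ge0 andbT.
by have := quot_norm_le u (b *: u) b; rewrite subrr nnorm0.
Qed.

(* A [b *: w] closer to [h] than [q u h] has the norm of [h]; then approximating
   [w] from [K u] would bring [h] closer to [K u] than [q u h]. *)
Lemma quot_norm_le_swap u w h : q u w * N h < q u h * N w -> q u h <= q w h.
Proof.
move=> lt_uw; rewrite leNgt; apply/negP => /quot_norm_lt[b hb].
have hbh : N (h - b *: w) < N h := lt_le_trans hb (quot_norm_le_nnorm u h).
have Nbw : v b * N w = N h.
  have -> : v b * N w = N (- (h - b *: w) + h) by rewrite opprB subrK nnormZ.
  by rewrite nnormD_eqr ?nnormN.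
have Nw : 0 < N w.
  rewrite lt_def nnorm_ge0 andbT; apply: contraTneq lt_uw => ->.
  by rewrite mulr0 -leNgt mulr_ge0 ?quot_norm_ge0 ?nnorm_ge0.
have lt_ub : q u w * v b < q u h by rewrite -(ltr_pM2r Nw) -mulrA Nbw.
have vb : 0 < v b.
  rewrite lt_def absv_ge0 andbT; apply: contraTneq lt_ub => vb0.
  by rewrite vb0 mulr0 -leNgt (le_trans (quot_norm_le_nnorm u h)) // -Nbw vb0 mul0r.
have /quot_norm_lt[a ha] : q u w < q u h / v b by rewrite ltr_pdivlMr.
have := quot_norm_le u h (b * a).
have -> : h - (b * a) *: u = (h - b *: w) + b *: (w - a *: u).
  by rewrite scalerBr scalerA addrA subrK.
rewrite leNgt => /negP; apply; apply: nnormD_lt => //.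
by rewrite nnormZ mulrC -ltr_pdivlMr.
Qed.

Lemma nnorm_orthogonal_pair p r : N p <= q r p ->
  forall a b, N (a *: p + b *: r) = Num.max (N (a *: p)) (N (b *: r)).
Proof.
move=> p_orth a b; have [->|a_nz] := eqVneq a 0.
  by rewrite !scale0r add0r nnorm0 max_r ?nnorm_ge0.
have le_ap : N (a *: p) <= N (a *: p + b *: r).
  have -> : a *: p + b *: r = a *: (p - (- (b / a)) *: r).
    by rewrite scaleNr opprK scalerDr scalerA mulrC divfK.
  by rewrite !nnormZ ler_wpM2l ?absv_ge0 // (le_trans p_orth) ?quot_norm_le.
have [le_ba|lt_ab] := leP (N (b *: r)) (N (a *: p)).
  by apply/eqP; rewrite eq_le le_ap nnormD_le.
by rewrite nnormD_eqr.
Qed.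

Lemma orthogonal_set_pair p r : p != 0 -> r != 0 -> N p <= q r p ->
  orthogonal_set N [set x | x = p \/ x = r].
Proof.
move=> p_nz r_nz p_orth; have pr : p != r.
  apply: contraTneq p_orth => ->.
  by rewrite quot_norm_line ?memv_line // -ltNge nnorm_gt0.
split=> [x [->|->] //|s c].
(* a duplicate-free [s] with entries in {p, r} has at most two entries *)
case: s => [|x [|y [|z s]]] /=; rewrite ?big_nil ?big_cons ?big_nil ?nnorm0 //.
- by rewrite addr0 max_l ?nnorm_ge0.
- rewrite inE andbT addr0 [Num.max (N _) 0]max_l ?nnorm_ge0 // => xy s_pr.
  have [x_pr y_pr] : (x = p \/ x = r) /\ (y = p \/ y = r).
    by split; apply: s_pr; rewrite !inE eqxx ?orbT.
  case: x_pr y_pr xy => -> [] -> //; rewrite ?eqxx // => _.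
    exact: nnorm_orthogonal_pair.
  by rewrite addrC maxC nnorm_orthogonal_pair.
- move=> xyz_uniq s_pr.
  have [x_pr y_pr z_pr] : [/\ x = p \/ x = r, y = p \/ y = r & z = p \/ z = r].
    by split; apply: s_pr; rewrite !inE eqxx ?orbT.
  move: xyz_uniq; case: x_pr => ->; case: y_pr => ->; case: z_pr => ->;
    by rewrite !inE !eqxx ?orbT ?andbF.
Qed.

Lemma maximal_orthogonal1_quot_norm_lt x0 u :
  maximal_orthogonal_set N [set x0] -> u != 0 -> q x0 u < N u /\ q u x0 < N x0.
Proof.
move=> [[x0_nz _] x0_max] u_nz; have {}x0_nz : x0 != 0 by exact: x0_nz.
have non_orth p r : p != 0 -> r != 0 -> p = x0 \/ r = x0 -> q r p < N p.
  move=> p_nz r_nz pr_x0; rewrite ltNge; apply/negP => p_orth.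
  have sub : [set x0] `<=` [set x | x = p \/ x = r].
    by move=> _ ->; case: pr_x0 => ->; [left | right].
  have eq_x0 := x0_max _ (orthogonal_set_pair p_nz r_nz p_orth) sub.
  have /= p_x0 : [set x0] p by rewrite -eq_x0; left.
  have /= r_x0 : [set x0] r by rewrite -eq_x0; right.
  by move: p_orth; rewrite p_x0 r_x0 quot_norm_line ?memv_line // leNgt nnorm_gt0 x0_nz.
by split; apply: non_orth => //; [right | left].
Qed.

Lemma quot_isometric_trans u x w :
  quot_isometric N u x -> quot_isometric N x w -> quot_isometric N u w.
Proof.
move=> [T1 [ker1 onto1 iso1]] [T2 [ker2 onto2 iso2]].
exists (T2 \o T1)%FUN; split=> [y | y | y] /=; rewrite ?ker2 ?ker1 ?iso2 ?iso1 //.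
have [z yz] := onto2 y; have [y' zy'] := onto1 z; exists y'.
have -> : y - T2 (T1 y') = (y - T2 z) + T2 (z - T1 y') by rewrite linearB addrA subrK.
by rewrite memvD // ker2.
Qed.

Lemma quot_norm_eq_on_complement u w th (H : {vspace E}) :
  0 < N u -> 0 < N w -> q u w <= th * N w -> q w u <= th * N u ->
  (forall h, h \in H -> h != 0 -> th * N h < q u h) ->
  {in H, forall h, q w h = q u h}.
Proof.
move=> Nu_gt0 Nw_gt0 quw qwu H_far h h_H; have [-> | h_nz] := eqVneq h 0.
  by rewrite !quot_norm_line ?mem0v.
have Nh_ge0 := nnorm_ge0 h; have far := H_far h h_H h_nz.
have le_uw : q u h <= q w h.
  apply: quot_norm_le_swap; apply: (@le_lt_trans _ _ (th * N w * N h)).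
    by rewrite ler_wpM2r.
  by rewrite mulrAC ltr_pM2r.
apply/eqP; rewrite eq_le le_uw andbT; apply: quot_norm_le_swap.
apply: (@le_lt_trans _ _ (th * N u * N h)); first by rewrite ler_wpM2r.
by rewrite mulrAC ltr_pM2r // (lt_le_trans far le_uw).
Qed.

Lemma capv_line_eq0 u (H : {vspace E}) :
  (forall h, h \in H -> h != 0 -> 0 < q u h) -> (H :&: <[u]> = 0)%VS.
Proof.
move=> H_pos; apply/eqP; rewrite -subv0; apply/subvP => h /memv_capP[h_H h_u].
rewrite memv0; apply/negPn/negP => h_nz.
by have := H_pos h h_H h_nz; rewrite quot_norm_line // ltxx.
Qed.

Lemma quot_isometric_of_complement u w (H : {vspace E}) :
  u != 0 -> w != 0 -> (H + <[u]> = fullv)%VS -> (H :&: <[u]> = 0)%VS ->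
  (H :&: <[w]> = 0)%VS -> {in H, forall h, q w h = q u h} -> quot_isometric N u w.
Proof.
move=> u_nz w_nz Hu_full Hu_cap Hw_cap qwu_H.
have Hw_full : (H + <[w]> = fullv)%VS.
  apply/eqP; rewrite eqEdim subvf /= dimv_disjoint_sum // -Hu_full.
  by rewrite dimv_disjoint_sum // !dim_vline u_nz w_nz.
pose T : {linear E -> E} := fun_of_lfun (daddv_pi H <[u]>).
have T_H x : T x \in H by exact: memv_pi.
have T_u x : x - T x \in <[u]>%VS.
  have := daddv_pi_add (w := x) Hu_cap; rewrite Hu_full memvf => /(_ isT) {1}<-.
  by rewrite addrC addKr memv_pi.
have T_w x : T x \in <[w]>%VS -> T x = 0.
  by move=> Tx_w; apply/eqP; rewrite -memv0 -Hw_cap memv_cap T_H.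
exists T; split=> [x | y | x].
- split=> [/T_w Tx0 | x_u]; first by have := T_u x; rewrite Tx0 subr0.
  suff -> : T x = 0 by rewrite mem0v.
  apply/eqP; rewrite -memv0 -Hu_cap memv_cap T_H /=.
  by rewrite -[T x]opprK -[- T x](addKr x) opprD opprK memvB.
- have : y \in (H + <[w]>)%VS by rewrite Hw_full memvf.
  case/memv_addP => h h_H [p p_w ->]; exists h.
  have -> : T h = h by exact: daddv_pi_id.
  by rewrite addrC addKr.
- by rewrite qwu_H ?T_H //; apply: quot_norm_eq_mod; rewrite -opprB memvN.
Qed.

Fixpoint t_orthogonal (t : R) (s : seq E) : Prop :=
  if s is e :: s' then
    (forall b z, z \in <<s'>>%VS -> t * N (b *: e) <= N (b *: e + z)) /\ t_orthogonal t s'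
  else True.

Definition adherent (S : {vspace E}) x :=
  forall eps, 0 < eps -> exists2 y, y \in S & N (x - y) < eps.

Lemma t_orthogonal_rcons_bound t s u h a : 0 < t -> t <= 1 ->
  t_orthogonal t (rcons s u) -> h \in <<s>>%VS -> t ^+ size s * N h <= N (h + a *: u).
Proof.
move=> t_gt0 t_le1; elim: s h => [|e s IH] h /=.
  by rewrite span_nil memv0 => _ /eqP ->; rewrite nnorm0 mulr0 nnorm_ge0.
case=> e_orth s_orth; rewrite span_cons => /memv_addP[_ /vlineP[k ->] [h' h'_s ->]].
set tot := k *: e + h' + a *: u.
have ke_le : t * N (k *: e) <= N tot.
  rewrite /tot -addrA e_orth // -cats1 span_cat span_seq1.
  by rewrite memv_add ?memvZ ?memv_line.
have h'_le : t * N (h' + a *: u) <= N tot.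
  have -> : h' + a *: u = tot - k *: e by rewrite /tot [RHS]addrC !addrA addNr add0r.
  have := nnormD tot (- (k *: e)); rewrite nnormN le_max => /orP[] le.
    by apply: le_trans (ler_wpM2l (ltW t_gt0) le) _; rewrite ler_piMl ?nnorm_ge0.
  exact: le_trans (ler_wpM2l (ltW t_gt0) le) ke_le.
have := nnormD (k *: e) h'; rewrite le_max => /orP[] le;
  apply: le_trans (ler_wpM2l (exprn_ge0 _ (ltW t_gt0)) le) _.
  rewrite exprSr -mulrA (le_trans _ ke_le) // ler_piMl //.
    by rewrite mulr_ge0 ?nnorm_ge0 // ltW.
  by rewrite exprn_ile1 // ltW.
by rewrite exprS -mulrA (le_trans _ h'_le) // ler_wpM2l ?IH // ltW.
Qed.

Section Complete.
Hypothesis hc : valued_complete v.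

Lemma adherent_cons t e s x : 0 < t -> t_orthogonal t (e :: s) ->
  adherent <<e :: s>> x -> exists b, adherent <<s>> (x - b *: e).
Proof.
move=> t_gt0 [e_orth _] x_adh; have [e0 | e_nz] := eqVneq e 0.
  exists 0; rewrite scale0r subr0 => eps /x_adh[y].
  rewrite span_cons e0 => /memv_addP[_ /vlineP[k ->] [z z_s ->]].
  by rewrite scaler0 add0r; exists z.
have Ne_gt0 : 0 < N e by rewrite nnorm_gt0.
have /choice[f f_approx] : forall j : nat, exists bz : K * E,
    bz.2 \in <<s>>%VS /\ N (x - (bz.1 *: e + bz.2)) < j.+1%:R^-1.
  move=> j; have /x_adh[y] : 0 < j.+1%:R^-1 :> R by rewrite invr_gt0 ltr0Sn.
  by rewrite span_cons => /memv_addP[_ /vlineP[k ->] [z z_s ->]] xy; exists (k, z).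
have invSn_le m j : (m <= j)%N -> j.+1%:R^-1 <= m.+1%:R^-1 :> R.
  by move=> le_mj; rewrite lef_pV2 ?posrE ?ltr0Sn // ler_nat.
(* [t]-orthogonality to <<s>> makes the coefficients on [e] of approximants of [x] Cauchy. *)
have cauchy eps : 0 < eps -> exists M, forall m n,
    (M <= m)%N -> (M <= n)%N -> v ((f m).1 - (f n).1) < eps.
  move=> eps_gt0; have [M hM] := invSn_lt_eventually (mulr_gt0 (mulr_gt0 eps_gt0 t_gt0) Ne_gt0).
  exists M => m n le_Mm le_Mn.
  have z_s : (f m).2 - (f n).2 \in <<s>>%VS.
    by rewrite memvB //; [case: (f_approx m) | case: (f_approx n)].
  have close_mn : N (((f m).1 - (f n).1) *: e + ((f m).2 - (f n).2)) < eps * t * N e.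
    have -> : ((f m).1 - (f n).1) *: e + ((f m).2 - (f n).2)
        = (x - ((f n).1 *: e + (f n).2)) - (x - ((f m).1 *: e + (f m).2)).
      by rewrite [in RHS]opprB [in RHS]addrC [in RHS]addrA subrK scalerBl opprD addrACA.
    apply: lt_trans (hM M (leqnn M)).
    by apply: nnormD_lt; rewrite ?nnormN (lt_le_trans (f_approx _).2) ?invSn_le.
  move: (le_lt_trans (e_orth _ _ z_s) close_mn).
  by rewrite nnormZ mulrCA mulrA !ltr_pM2r.
have [b b_lim] := hc cauchy.
exists b => eps eps_gt0.
have [M1 hM1] := b_lim (eps / N e) (divr_gt0 eps_gt0 Ne_gt0).
have [M2 hM2] := invSn_lt_eventually eps_gt0.
pose j := maxn M1 M2; exists (f j).2; first by case: (f_approx j).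
have -> : x - b *: e - (f j).2 = (x - ((f j).1 *: e + (f j).2)) + ((f j).1 - b) *: e.
  by rewrite scalerBl opprD [x + (- _ - _)]addrA addrACA subrK [- _ - _]addrC addrA.
apply: nnormD_lt; first exact: lt_trans (f_approx j).2 (hM2 j (leq_maxr _ _)).
by rewrite nnormZ -ltr_pdivlMr // hM1 ?leq_maxl.
Qed.

Lemma t_orthogonal_span_closed t s x : 0 < t -> t_orthogonal t s ->
  adherent <<s>> x -> x \in <<s>>%VS.
Proof.
move=> t_gt0; elim: s x => [|e s IH] x s_orth x_adh.
  rewrite span_nil memv0; apply: contraT; rewrite -nnorm_gt0 => /x_adh[y].
  by rewrite span_nil memv0 => /eqP ->; rewrite subr0 ltxx.
have [b /(IH _ s_orth.2) xbe_s] := adherent_cons t_gt0 s_orth x_adh.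
by rewrite -(subrK (b *: e) x) span_cons addrC memv_add ?memvZ ?memv_line.
Qed.

Lemma t_orthogonal_extend t s x : 0 < t -> t < 1 -> t_orthogonal t s ->
  x \notin <<s>>%VS -> exists2 e, t_orthogonal t (e :: s) & e \notin <<s>>%VS.
Proof.
move=> t_gt0 t_lt1 s_orth x_s.
pose D := [set N (x - y) | y in [set y | y \in <<s>>%VS]].
have D_inf : has_inf D.
  split; first by exists (N (x - 0)), 0; rewrite //= mem0v.
  by exists 0 => _ [y _ <-]; exact: nnorm_ge0.
have d_gt0 : 0 < inf D.
  have d_ge0 : 0 <= inf D by apply: lb_le_inf D_inf.1 _ => _ [y _ <-]; exact: nnorm_ge0.
  rewrite lt_def d_ge0 andbT; apply: contra x_s => /eqP d0.
  apply: (t_orthogonal_span_closed t_gt0 s_orth) => eps eps_gt0.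
  have [_ [y y_s <-]] := inf_adherent eps_gt0 D_inf.
  by rewrite d0 add0r; exists y.
have [_ [y y_s <-]] : exists2 r, D r & r < inf D + (inf D / t - inf D).
  by apply: inf_adherent D_inf; rewrite subr_gt0 ltr_pdivlMr // gtr_pMr.
rewrite addrCA subrr addr0 ltr_pdivlMr // mulrC => xy_lt.
exists (x - y); last by apply: contra x_s => xy_s; rewrite -(subrK y x) memvD.
split=> // b z z_s; have [-> | b_nz] := eqVneq b 0.
  by rewrite scale0r nnorm0 mulr0 add0r nnorm_ge0.
have -> : b *: (x - y) + z = b *: (x - (y - b^-1 *: z)).
  by rewrite opprB addrA !scalerDr !scalerN scalerA mulfV // scale1r addrAC.
rewrite !nnormZ mulrCA ler_pM2l ?absv_gt0 //.
apply: le_trans (ltW xy_lt) (ge_inf D_inf.2 _).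
by exists (y - b^-1 *: z); rewrite //= memvB ?memvZ.
Qed.

Lemma t_orthogonal_completion t s : 0 < t -> t < 1 -> t_orthogonal t s ->
  exists s', [/\ t_orthogonal t (s' ++ s), <<s' ++ s>>%VS = fullv
    & (size s' <= \dim {:E} - \dim <<s>>)%N].
Proof.
move=> t_gt0 t_lt1.
suff grow m s0 : (\dim {:E} - \dim <<s0>> <= m)%N -> t_orthogonal t s0 ->
    exists s', [/\ t_orthogonal t (s' ++ s0), <<s' ++ s0>>%VS = fullv & (size s' <= m)%N].
  exact: grow.
elim: m s0 {s} => [|m IH] s codim_s s_orth.
  exists [::]; split=> //; apply/eqP; rewrite eqEdim subvf /=.
  by rewrite -subn_eq0 -leqn0.
have [full | /subvPn[x _ x_s]] := boolP (fullv <= <<s>>)%VS.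
  by exists [::]; split=> //; apply/eqP; rewrite eqEsubv subvf.
have [e es_orth e_s] := t_orthogonal_extend t_gt0 t_lt1 s_orth x_s.
have lt_dim : (\dim <<s>> < \dim <<e :: s>>)%N.
  rewrite span_cons (ltn_leqif (dimv_leqif_sup (addvSr _ _))).
  by apply: contra e_s => /subvP; apply; apply: subvP (addvSl _ _) _ (memv_line e).
have le_dim := dimvS (subvf <<e :: s>>).
have [|s' [s'_orth s'_full size_s']] := IH (e :: s) _ es_orth; first by lia.
by exists (rcons s' e); rewrite cat_rcons size_rcons.
Qed.

Lemma almost_orthogonal_complement u th : u != 0 -> th < 1 ->
  exists2 H : {vspace E}, (H + <[u]> = fullv)%VS &
    forall h, h \in H -> h != 0 -> th * N h < q u h.
Proof.
move=> u_nz th_lt1; have [t [t_gt0 t_lt1 th_t]] := exists_exprn_gt (\dim {:E}) th_lt1.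
have u_orth : t_orthogonal t [:: u].
  split=> // b z; rewrite span_nil memv0 => /eqP ->.
  by rewrite addr0 ler_piMl ?nnorm_ge0 ?ltW.
have [s [s_orth s_full size_s]] := t_orthogonal_completion t_gt0 t_lt1 u_orth.
exists <<s>>%VS; first by rewrite -span_seq1 -span_cat.
move=> h h_s h_nz; apply: (@lt_le_trans _ _ (t ^+ size s * N h)).
  rewrite ltr_pM2r ?nnorm_gt0 //; apply: lt_le_trans th_t _.
  by rewrite ler_wiXn2l ?ltW // (leq_trans size_s (leq_subr _ _)).
apply: quot_norm_ge => a; rewrite -scaleNr.
by apply: t_orthogonal_rcons_bound; rewrite -?cats1 // ltW.
Qed.

Lemma quot_isometric_of_quot_norm_lt u w : u != 0 -> w != 0 ->
  q u w < N w -> q w u < N u -> quot_isometric N u w.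
Proof.
move=> u_nz w_nz quw qwu.
have Nu_gt0 : 0 < N u by rewrite nnorm_gt0.
have Nw_gt0 : 0 < N w by rewrite nnorm_gt0.
pose th := Num.max (q u w / N w) (q w u / N u).
have th_ge0 : 0 <= th by rewrite le_max divr_ge0 ?quot_norm_ge0 ?nnorm_ge0.
have th_lt1 : th < 1 by rewrite gt_max !ltr_pdivrMr // !mul1r quw qwu.
have [H Hu_full H_far] := almost_orthogonal_complement u_nz th_lt1.
have qwu_H : {in H, forall h, q w h = q u h}.
  by apply: quot_norm_eq_on_complement H_far; rewrite // -ler_pdivrMr // le_max lexx ?orbT.
have H_pos h : h \in H -> h != 0 -> 0 < q u h.
  by move=> h_H h_nz; apply: le_lt_trans (H_far h h_H h_nz); rewrite mulr_ge0 ?nnorm_ge0.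
apply: (quot_isometric_of_complement u_nz w_nz Hu_full _ _ qwu_H).
  exact: capv_line_eq0.
by apply: capv_line_eq0 => h h_H; rewrite qwu_H //; apply: H_pos.
Qed.

End Complete.
End NonArchimedeanNorm.

Unset Implicit Arguments. Set Strict Implicit.

Theorem mainTheorem9 (R : realType) (K : fieldType) (v : K -> R)
  (hv : is_nonarch_abs v) (hnt : nontrivially_valued v)
  (hc : valued_complete v) (hnsc : ~ spherically_complete v)
  (E : vectType K) (N : E -> R) (hN : is_nonarch_norm v N)
  (hdim : dual_dim_one N) :
  forall u w : E, u != 0 -> w != 0 -> quot_isometric N u w.
Proof.
move=> u w u_nz w_nz; have [x0 x0_max] := hdim.
have x0_nz : x0 != 0 by case: x0_max => [[x0_nz _] _]; exact: x0_nz.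
have [qx0u qux0] := maximal_orthogonal1_quot_norm_lt hv hN x0_max u_nz.
have [qx0w qwx0] := maximal_orthogonal1_quot_norm_lt hv hN x0_max w_nz.
apply: (quot_isometric_trans (x := x0)).
  exact: (quot_isometric_of_quot_norm_lt hv hN hc u_nz x0_nz qux0 qx0u).
exact: (quot_isometric_of_quot_norm_lt hv hN hc x0_nz w_nz qx0w qwx0).
Qed.
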